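(* For all integers $k\ge4$ and $n\ge1$, $$\chi''_c(G_{k,n})\le k+1+\frac{1}{2n}.$$
   Context: A half-edge has exactly one end vertex. Let $H_k$ be obtained from $K_{k,k}$ by deleting one vertex but keeping its $k$ incident edges as half-edges, and let $H'_k$ be obtained from $H_k$ by deleting $k-2$ of its half-edges. Let $B_1,\ldots,B_n$ be copies of $H'_k$ with half-edges $f_i,f'_i$ in $B_i$, and let $B_0$ be a single vertex $u$ with two half-edges $f_0,f'_{n+1}$. $G_{k,n}$ is obtained from the disjoint union of $B_0,\ldots,B_n$ by joining $f_i$ and $f'_{i+1}$ into an edge for each $0\le i\le n$. For integers $p\ge q\ge1$, a $(p,q)$-total colouring of a graph assigns colours in $\{0,\ldots,p-1\}$ to vertices and edges such that $q\le|c(a)-c(b)|\le p-q$ whenever $a,b$ are adjacent vertices, edges sharing an end, or an incident vertex–edge pair; $\chi''_c(G)=\inf\{p/q\mid G \text{ has a } (p,q)\text{-total colouring}\}$. *)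

From HB Require Import structures.
From mathcomp Require Import all_boot all_order all_algebra.
From mathcomp Require Import all_classical all_reals.
Set Implicit Arguments. Unset Strict Implicit. Unset Printing Implicit Defensive.
Import Order.TTheory GRing.Theory Num.Theory.

(* Vertices: None = u (the block B_0); Some (i, inl j) = vertex a_{j+1} of
   block B_{i+1} (the side of K_{k,k} that keeps all k vertices);
   Some (i, inr j) = vertex b_{j+1} of block B_{i+1} (the side from which one
   vertex was deleted, so k-1 vertices).  In H'_k the two remaining
   half-edges are at a_1 (half-edge f_i) and a_2 (half-edge f'_i). *)
Definition Gvert (k n : nat) : finType := option ('I_n * ('I_k + 'I_k.-1)).

Definition Gbase (k n : nat) (x y : Gvert k n) : bool :=
  match x, y with
  | None, Some (i, inl j) =>
      (* f_0 joined with f'_1 (at a_2 of B_1); f_n joined with f'_{n+1} (at a_1 of B_n) *)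
      ((nat_of_ord i == 0) && (nat_of_ord j == 1))
      || ((nat_of_ord i == n.-1) && (nat_of_ord j == 0))
  | Some (i, inl j), Some (i', inl j') =>
      (* f_{i+1} (at a_1 of B_{i+1}) joined with f'_{i+2} (at a_2 of B_{i+2}) *)
      [&& nat_of_ord j == 0, nat_of_ord j' == 1 & (nat_of_ord i).+1 == nat_of_ord i']
  | Some (i, inl _), Some (i', inr _) =>
      (* edges of K_{k,k} minus a vertex, inside each block *)
      i == i'
  | _, _ => false
  end.

Definition Gadj (k n : nat) : rel (Gvert k n) :=
  fun x y => Gbase x y || Gbase y x.

Definition far (p q a b : nat) : bool :=
  (q <= maxn a b - minn a b) && (maxn a b - minn a b <= p - q).

Definition total_colouring (V : finType) (adj : rel V) (p q : nat)
    (cv : V -> nat) (ce : V -> V -> nat) : Prop :=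
  [/\ (forall x, cv x < p),
      (forall x y, adj x y -> ce x y < p /\ ce x y = ce y x),
      (forall x y, adj x y -> far p q (cv x) (cv y)),
      (forall x y z, adj x y -> adj x z -> y != z -> far p q (ce x y) (ce x z))
    & (forall x y, adj x y -> far p q (cv x) (ce x y))].

Definition has_pq_total_colouring (V : finType) (adj : rel V) (p q : nat) : Prop :=
  [/\ 1 <= q, q <= p & exists cv ce, total_colouring adj p q cv ce].

Local Open Scope classical_set_scope.
Local Open Scope ring_scope.

Definition circ_total_chi (R : realType) (V : finType) (adj : rel V) : R :=
  inf [set r : R | exists p q : nat,
         has_pq_total_colouring adj p q /\ r = p%:R / q%:R].

From mathcomp Require Import all_boot all_order all_algebra.
From mathcomp Require Import all_classical all_reals.
From mathcomp Require Import zify ring.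
Set Implicit Arguments. Unset Strict Implicit. Unset Printing Implicit Defensive.

(* With q = 2n and p = (k+1)q + 1 we have p/q = k + 1 + 1/(2n), so it suffices
   to exhibit a (p,q)-total colouring of G_{k,n}.  Colours are written m q + s
   with a level 0 <= m <= k and an offset 0 <= s <= q.  Levels alone give a
   (k+1)-total colouring of each block H'_k: the b-vertices and both half-edges
   get level k, the edge a_j b_l gets level (l+1-j) mod k, and a_j gets the
   level -j mod k that is missing among its edges.  This fails only at u, whose
   two edges would both get level k.  So block B_{i+1} is shifted by the offset
   2i, the edge joining B_{i+1} to B_{i+2} gets level k and offset 2i+2, and the
   two edges at u end up with colours kq and kq + q, one full unit apart.
   Offset corrections by 1 keep colours of consecutive levels, and colours of
   levels 0 and k (close to each other around the circle of length p/q), far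
   enough apart. *)

Lemma farC p q a b : far p q a b = far p q b a.
Proof. by rewrite /far maxnC minnC. Qed.

Section GridColours.
Variables (k q : nat).

Definition grid (m s : nat) := m * q + s.
Definition grid_period := k.+1 * q + 1.

Lemma grid_lt_period m s : m <= k -> s <= q -> grid m s < grid_period.
Proof. by move=> hm hs; rewrite /grid /grid_period; nia. Qed.

Lemma far_grid m1 s1 m2 s2 : s1 <= q -> s2 <= q -> m1 <= m2 <= m1 + k ->
    (m1 = m2 -> s1 + q <= s2) -> (m1.+1 = m2 -> s1 <= s2) ->
    (m2 = m1 + k -> s2 <= s1 + 1) ->
  far grid_period q (grid m1 s1) (grid m2 s2).
Proof.
move=> hs1 hs2 /andP[m12 m2k] same_level next_level wrap_level.
have [d def_m2] : exists d, m2 = m1 + d by exists (m2 - m1); lia.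
subst m2; rewrite /far /grid /grid_period.
case: d m12 same_level next_level wrap_level m2k => [|[|d]] _ same next wrap dk.
- move: (same (esym (addn0 m1))); nia.
- move: (next (esym (addn1 m1))); nia.
- case: (ltngtP d.+2 k) => d_k.
  + nia.
  + lia.
  + move: (wrap (congr1 _ d_k)); nia.
Qed.

End GridColours.

Section Colouring.
Variables (k n : nat).
Local Notation col := (grid (2 * n)).

Definition ab_major (j l : nat) := if j <= l.+1 then l.+1 - j else l.+1 + k - j.
Definition ab_offset (j l : nat) := if (j == 0) || (l.+1 < j) then 1 else 0.

Definition col_ab (i j l : nat) := col (ab_major j l) (2 * i + ab_offset j l).
(* The joining edge at a_j, j in {0,1}, of block i: the edge from a_0 in block i
   to a_1 in block i+1 gets the same colour from both ends. *)
Definition col_link (i j : nat) := col k (2 * i + (if j == 0 then 2 else 0)).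
Definition col_a (i j : nat) :=
  col (if j == 0 then 0 else k - j) (2 * i + (if j == 0 then 1 else 0)).
Definition col_b (i : nat) := col k (2 * i + 1).
Definition col_u := col 2 0.

Definition Gvcol (x : Gvert k n) : nat :=
  match x with
  | None => col_u
  | Some (i, inl j) => col_a i j
  | Some (i, inr _) => col_b i
  end.

Definition Gecol (x y : Gvert k n) : nat :=
  match x, y with
  | Some (i, inl j), Some (_, inr l) | Some (_, inr l), Some (i, inl j) => col_ab i j l
  | Some (i, inl j), _ | None, Some (i, inl j) => col_link i j
  | _, _ => 0
  end.

End Colouring.

Ltac unfold_colours :=
  rewrite /= /col_ab /col_link /col_a /col_b /col_u /ab_major /ab_offset;
  repeat (case: ifPn => ? /=).

Ltac simpl_adj := rewrite /Gadj /=; do ?[rewrite eqE /=]; rewrite ?eqnE.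

Ltac far_by_grid :=
  match goal with |- is_true (far _ _ (grid _ ?m1 _) (grid _ ?m2 _)) =>
    case: (leqP m1 m2) => ?;
    first [ apply: far_grid; lia | rewrite farC; apply: far_grid; lia ] end.

Ltac grid_solve := unfold_colours;
  first [ far_by_grid | apply: grid_lt_period; lia | exfalso; lia ].

Section ColouringProperties.
Variables (k n : nat).
Hypothesis k_ge4 : 3 < k.
Local Notation p := (grid_period k (2 * n)).
Local Notation q := (2 * n).

Lemma Gvcol_lt (x : Gvert k n) : Gvcol x < p.
Proof. by case: x => [[[i hi] [[j hj]|[l hl]]]|]; grid_solve. Qed.

Lemma Gecol_lt (x y : Gvert k n) : Gadj x y -> Gecol x y < p.
Proof.
by case: x y => [[[i hi] [[j hj]|[l hl]]]|] [[[i' hi'] [[j' hj']|[l' hl']]]|];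
  simpl_adj => ?; grid_solve.
Qed.

Lemma GecolC (x y : Gvert k n) : Gadj x y -> Gecol x y = Gecol y x.
Proof.
by case: x y => [[[i hi] [[j hj]|[l hl]]]|] [[[i' hi'] [[j' hj']|[l' hl']]]|];
  simpl_adj => ?; rewrite /= /col_link /grid; repeat (case: ifPn => ? /=); lia.
Qed.

Lemma Gvcol_far (x y : Gvert k n) : Gadj x y -> far p q (Gvcol x) (Gvcol y).
Proof.
by case: x y => [[[i hi] [[j hj]|[l hl]]]|] [[[i' hi'] [[j' hj']|[l' hl']]]|];
  simpl_adj => ?; grid_solve.
Qed.

Lemma Gvcol_Gecol_far (x y : Gvert k n) : Gadj x y -> far p q (Gvcol x) (Gecol x y).
Proof.
by case: x y => [[[i hi] [[j hj]|[l hl]]]|] [[[i' hi'] [[j' hj']|[l' hl']]]|];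
  simpl_adj => ?; grid_solve.
Qed.

Lemma Gecol_far (x y z : Gvert k n) : Gadj x y -> Gadj x z -> y != z ->
  far p q (Gecol x y) (Gecol x z).
Proof.
by case: x y z => [[[i hi] [[j hj]|[l hl]]]|] [[[i' hi'] [[j' hj']|[l' hl']]]|]
  [[[i'' hi''] [[j'' hj'']|[l'' hl'']]]|]; simpl_adj => ? ? ?; grid_solve.
Qed.

Hypothesis n_gt0 : 0 < n.

Lemma Gadj_total_colouring : has_pq_total_colouring (@Gadj k n) p q.
Proof.
split; [lia | rewrite /grid_period; nia | exists (@Gvcol k n), (@Gecol k n)].
split=> [x | x y xy | | |].
- exact: Gvcol_lt.
- by split; [exact: Gecol_lt | exact: GecolC].
- exact: Gvcol_far.
- exact: Gecol_far.
- exact: Gvcol_Gecol_far.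
Qed.

End ColouringProperties.

Import Order.TTheory GRing.Theory Num.Theory.
Local Open Scope ring_scope.

Lemma circ_total_chi_le (R : realType) (V : finType) (adj : rel V) (p q : nat) :
  has_pq_total_colouring adj p q -> circ_total_chi R adj <= p%:R / q%:R.
Proof.
move=> colouring; apply: ge_inf; last by exists p, q.
by exists 0 => _ [p' [q' [_ ->]]]; rewrite divr_ge0.
Qed.

Lemma grid_period_ratio (F : fieldType) (k q : nat) : q%:R != 0 :> F ->
  (grid_period k q)%:R / q%:R = k%:R + 1 + 1 / q%:R :> F.
Proof. by move=> q_neq0; rewrite /grid_period -addn1 !natrD natrM; field. Qed.

Theorem theorem8 (R : realType) (k n : nat) :
  (4 <= k)%N -> (1 <= n)%N ->
  circ_total_chi R (@Gadj k n) <= k%:R + 1 + 1 / (2 * n%:R).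
Proof.
move=> k_ge4 n_gt0.
have q_neq0 : (2 * n)%:R != 0 :> R by rewrite pnatr_eq0; lia.
rewrite -natrM -grid_period_ratio //.
exact: circ_total_chi_le (Gadj_total_colouring k_ge4 n_gt0).
Qed.
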